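(* For every integer $d\ge 1$, the $d$-dimensional hypercube $Q_d$ is $\mathbb{Z}_{2^d}$-distance antimagic if and only if $d$ is odd.
   Context: $Q_d$ is the graph whose vertices are the binary strings of length $d$, two being adjacent iff they differ in exactly one position. $\mathbb{Z}_m$ is the cyclic group of integers modulo $m$. For a graph $G$ with $n$ vertices and an Abelian group $A$ of order $n$ (written additively), and a bijection $f:V(G)\to A$, the weight of $x$ is $w_f(x)=\sum_{y\in N(x)} f(y)$ computed in $A$ ($N(x)$ the open neighbourhood). $f$ is an $A$-distance antimagic labelling if all weights are pairwise distinct; $G$ is $A$-distance antimagic if it admits such a labelling. *)

From HB Require Import structures.
From mathcomp Require Import all_boot all_order all_algebra.
Set Implicit Arguments. Unset Strict Implicit. Unset Printing Implicit Defensive.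
Import GRing.Theory.
Local Open Scope ring_scope.

Definition cube_vertex (d : nat) := {ffun 'I_d -> bool}.

Definition cube_adj (d : nat) : rel (cube_vertex d) :=
  fun x y => #|[set i : 'I_d | x i != y i]| == 1%N.

Definition dist_weight (V : finType) (adj : rel V) (A : zmodType) (f : V -> A) (x : V) : A :=
  \sum_(y : V | adj x y) f y.

Definition distance_antimagic_labelling (V : finType) (adj : rel V) (A : zmodType)
  (f : V -> A) : Prop :=
  bijective f /\ injective (dist_weight adj f).

Definition distance_antimagic (V : finType) (adj : rel V) (A : zmodType) : Prop :=
  exists f : V -> A, distance_antimagic_labelling adj f.

From HB Require Import structures.
From mathcomp Require Import all_boot all_order all_algebra.
From mathcomp Require Import zify ring.
Import GRing.Theory.

(* Necessity is a double-counting argument valid in any k-regular graph: summing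
   the weights counts every label k times, and a distance antimagic labelling
   makes both the labels and the weights run over the whole group, so the sum S
   of all group elements satisfies S *+ k = S.  In Z_m with m even,
   S = m/2; for m = 2^d and d even, (2^(d-1)) *+ d = 0 <> 2^(d-1).

   Sufficiency uses the binary-code labelling f(x) = sum_i x_i 2^i.  Flipping
   bit i changes the code by +-2^i, which yields the identity
   w(x) = (d - 2) f(x) - 1 in Z_(2^d); for d odd, d - 2 is a unit, so the
   weights are pairwise distinct. *)

Local Open Scope ring_scope.

Section RegularGraph.
Variables (V : finType) (adj : rel V) (k : nat).
Hypothesis adj_sym : symmetric adj.
Hypothesis adj_regular : forall x : V, #|[pred y | adj x y]| = k.

(* Double counting: in a symmetric k-regular graph every label enters exactly
   k neighbourhood sums. *)
Lemma sum_dist_weight (A : zmodType) (f : V -> A) :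
  \sum_x dist_weight adj f x = (\sum_x f x) *+ k.
Proof.
rewrite /dist_weight (exchange_big_dep predT) //= -sumrMnl.
apply: eq_bigr => y _; rewrite -(adj_regular y) -sumr_const; apply: eq_bigl => x.
by rewrite inE adj_sym.
Qed.

(* For a distance antimagic labelling onto a group of the same size, labels and
   weights both enumerate the group, so the sum of all its elements is fixed
   by multiplication by the degree. *)
Lemma antimagic_sum (A : finZmodType) (f : V -> A) :
  #|A| = #|V| -> distance_antimagic_labelling adj f ->
  (\sum_(a : A) a) *+ k = \sum_(a : A) a.
Proof.
move=> cardA [f_bij w_inj].
have w_bij : bijective (dist_weight adj f) by apply: inj_card_bij; rewrite ?cardA.
have sum_f : \sum_x f x = \sum_(a : A) a by rewrite (reindex f) //; apply: onW_bij.
rewrite -{1}sum_f -sum_dist_weight.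
by rewrite (reindex _ (onW_bij _ w_bij)).
Qed.

End RegularGraph.
Arguments antimagic_sum {V adj k} adj_sym adj_regular {A f}.

(* The elements of Z_m add up to 'C(m, 2), which is m/2 when m is even. *)
Lemma sum_Zp_even (m : nat) : (1 < m)%N -> ~~ odd m ->
  \sum_(a : 'Z_m) a = (m./2)%:R.
Proof.
move=> m_gt1 m_even.
have -> : \sum_(a : 'Z_m) a = ('C(m, 2))%:R.
  rewrite (eq_bigr (fun a : 'Z_m => (val a)%:R)); last by move=> a _; rewrite natr_Zp.
  rewrite -natr_sum; congr (_%:R).
  by rewrite -[in RHS](Zp_cast m_gt1) -bin2_sum big_mkord.
apply: val_inj; rewrite /= !val_Zp_nat // bin2.
have m_double : m = (2 * m./2)%N by rewrite mul2n -[LHS]odd_double_half (negbTE m_even).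
have half_gt0 : (0 < m./2)%N by move: m_gt1; rewrite m_double; lia.
have -> : ((m * m.-1)./2 = m./2.-1 * m + m./2)%N.
  rewrite [in LHS]m_double -mulnA mul2n doubleK m_double; nia.
by rewrite modnMDl.
Qed.

(* Z_(2^m) is a genuine Z/2^mZ only for m > 0. *)
Lemma pow2_gt1 {m : nat} : (0 < m)%N -> (1 < 2 ^ m)%N.
Proof. by move=> m_gt0; rewrite -{1}(expn0 2) ltn_exp2l. Qed.

Lemma odd_unit_Zp_pow2 (m n : nat) : (0 < m)%N -> odd n ->
  (n%:R : 'Z_(2 ^ m)) \is a GRing.unit.
Proof.
by move=> m_gt0 n_odd; rewrite unitZpE ?pow2_gt1 // coprime_pexpl // coprime2n.
Qed.

(* In Z_(2^m), the element 2^(m-1) of order two is fixed by multiplication by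
   m only when m is odd (for m even, m * 2^(m-1) is a multiple of 2^m). *)
Lemma half_pow2_fixed (m : nat) : (0 < m)%N ->
  ((2 ^ m)./2%:R : 'Z_(2 ^ m)) *+ m = (2 ^ m)./2%:R -> odd m.
Proof.
move=> m_gt0; apply: contraPT => /negbTE m_even.
rewrite -mulrnA => /(congr1 val); rewrite /= !val_Zp_nat ?pow2_gt1 //.
have pow_m : (2 ^ m = 2 * 2 ^ m.-1)%N by rewrite -expnS prednK.
have m_double : m = (2 * m./2)%N by rewrite mul2n -[LHS]odd_double_half m_even.
rewrite pow_m mul2n doubleK -mul2n; set p := (2 ^ m.-1)%N.
have p_gt0 : (0 < p)%N by rewrite expn_gt0.
have -> : (p * m = m./2 * (2 * p))%N by rewrite {1}m_double; nia.
by rewrite modnMl modn_small; [move=> p0; rewrite -p0 in p_gt0 | lia].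
Qed.

Section BinaryNumerals.
Local Open Scope nat_scope.

Definition bin_val (g : nat -> bool) (n : nat) : nat := \sum_(j < n) g j * 2 ^ j.

Lemma bin_valS (g : nat -> bool) (n : nat) :
  bin_val g n.+1 = g 0 + 2 * bin_val (fun j => g j.+1) n.
Proof.
rewrite /bin_val big_ord_recl /= expn0 muln1 big_distrr /=; congr (_ + _).
by apply: eq_bigr => j _; rewrite expnS mulnCA.
Qed.

Lemma bin_val_lt (g : nat -> bool) (n : nat) : bin_val g n < 2 ^ n.
Proof.
elim: n g => [|n IHn] g; first by rewrite /bin_val big_ord0.
by rewrite bin_valS expnS; have := IHn (fun j => g j.+1); case: (g 0) => /=; lia.
Qed.

Lemma bin_val_inj (n : nat) (g g' : nat -> bool) :
  bin_val g n = bin_val g' n -> forall j, j < n -> g j = g' j.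
Proof.
elim: n g g' => [|n IHn] g g' // E j lt_jn; rewrite !bin_valS in E.
have g0 : g 0 = g' 0 by move: E; case: (g 0); case: (g' 0) => /=; lia.
case: j lt_jn => [|j] lt_jn; first exact: g0.
by apply: (IHn (fun j => g j.+1) (fun j => g' j.+1)) => //; rewrite g0 in E; lia.
Qed.

Lemma sum_pow2 (n : nat) : (\sum_(j < n) 2 ^ j).+1 = 2 ^ n.
Proof.
elim: n => [|n IHn]; first by rewrite big_ord0.
rewrite big_ord_recr /= expnS -IHn; set S := bigop _ _ _; lia.
Qed.

End BinaryNumerals.

Section Hypercube.
Variable d : nat.
Implicit Types (x y : cube_vertex d) (i : 'I_d).

Definition flip x i : cube_vertex d := [ffun j => if j == i then ~~ x j else x j].

Lemma flip_inj x : injective (flip x).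
Proof.
move=> i j /ffunP /(_ i); rewrite !ffunE eqxx.
by case: eqVneq => // _; case: (x i).
Qed.

Lemma cube_adjE x y : cube_adj x y = (y \in [set flip x i | i : 'I_d]).
Proof.
apply/idP/imsetP => [/cards1P [i Hi] | [i _ ->]].
  exists i => //; apply/ffunP => j; move/setP/(_ j): Hi; rewrite !inE ffunE.
  case: (eqVneq j i) => [->|_] /=; first by case: (x i); case: (y i).
  by move/negbFE/eqP.
apply/cards1P; exists i; apply/setP => j; rewrite !inE ffunE.
by case: (eqVneq j i) => _ /=; [case: (x j) | rewrite eqxx].
Qed.

Lemma cube_adj_sym : symmetric (@cube_adj d).
Proof.
move=> x y; rewrite /cube_adj; congr (_ == _).
by apply: eq_card => i; rewrite !inE eq_sym.
Qed.

Lemma cube_regular x : #|[pred y | cube_adj x y]| = d.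
Proof.
rewrite (eq_card (B := [set flip x i | i : 'I_d])) => [|y]; last by rewrite inE cube_adjE.
by rewrite card_imset ?card_ord //; apply: flip_inj.
Qed.

Lemma weight_flip (A : zmodType) (f : cube_vertex d -> A) x :
  dist_weight (@cube_adj d) f x = \sum_i f (flip x i).
Proof.
rewrite /dist_weight (eq_bigl (mem [set flip x i | i : 'I_d])) => [|y]; last first.
  by rewrite cube_adjE.
by rewrite big_imset //= => i j _ _; apply: flip_inj.
Qed.

Definition cube_code x : nat := (\sum_i x i * 2 ^ i)%N.

Definition cube_digits x (n : nat) : bool :=
  if insub n is Some i then x i else false.

Lemma cube_code_bin x : cube_code x = bin_val (cube_digits x) d.
Proof. by apply: eq_bigr => i _; rewrite /cube_digits valK. Qed.

Lemma cube_code_inj : injective cube_code.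
Proof.
move=> x y /eqP; rewrite !cube_code_bin => /eqP /bin_val_inj eq_digits.
by apply/ffunP => i; have := eq_digits i (ltn_ord i); rewrite /cube_digits valK.
Qed.

Lemma cube_code_lt x : (cube_code x < 2 ^ d)%N.
Proof. by rewrite cube_code_bin bin_val_lt. Qed.

Lemma cube_code_flip x i :
  (cube_code (flip x i) + 2 * (x i * 2 ^ i) = cube_code x + 2 ^ i)%N.
Proof.
rewrite /cube_code (bigD1 i) //= [X in (_ = X + _)%N](bigD1 i) //= ffunE eqxx.
rewrite (eq_bigr (fun j => x j * 2 ^ j)%N) => [|j /negPf ji]; last by rewrite ffunE ji.
by set S := bigop _ _ _; case: (x i) => /=; lia.
Qed.

Lemma sum_cube_code_flip x :
  (\sum_i cube_code (flip x i) + 2 * cube_code x + 1 = d * cube_code x + 2 ^ d)%N.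
Proof.
have : (\sum_(i < d) (cube_code (flip x i) + 2 * (x i * 2 ^ i))
        = \sum_(i < d) (cube_code x + 2 ^ i))%N.
  by apply: eq_bigr => i _; exact: cube_code_flip.
rewrite !big_split /= big1_eq -/(cube_code x) sum_nat_const card_ord -sum_pow2.
by set A := (\sum_(i < d) cube_code _)%N; set B := (\sum_(i < d) 2 ^ i)%N; lia.
Qed.

Section Labellings.
Hypothesis d_gt0 : (0 < d)%N.

Lemma card_Z_cube : #|'Z_(2 ^ d)| = #|cube_vertex d|.
Proof. by rewrite card_ord Zp_cast ?pow2_gt1 // card_ffun card_bool card_ord. Qed.

Lemma cube_antimagic_odd : distance_antimagic (@cube_adj d) 'Z_(2 ^ d) -> odd d.
Proof.
move=> [f f_antimagic]; apply: half_pow2_fixed => //.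
have := antimagic_sum cube_adj_sym cube_regular card_Z_cube f_antimagic.
by rewrite sum_Zp_even ?pow2_gt1 ?oddX ?orbF -?lt0n.
Qed.

Definition code_label x : 'Z_(2 ^ d) := (cube_code x)%:R.

Lemma code_label_bij : bijective code_label.
Proof.
apply: inj_card_bij; last by rewrite card_Z_cube.
move=> x y /(congr1 val); rewrite /= !val_Zp_nat ?pow2_gt1 // !modn_small ?cube_code_lt //.
exact: cube_code_inj.
Qed.

Lemma weight_code_label x :
  dist_weight (@cube_adj d) code_label x = (d%:R - 2%:R) * code_label x - 1.
Proof.
rewrite weight_flip /code_label.
have := congr1 (fun n => n%:R : 'Z_(2 ^ d)) (sum_cube_code_flip x).
rewrite /= !natrD natr_sum !natrM pchar_Zp ?pow2_gt1 // !addr0 => sum_eq.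
by rewrite mulrBl -sum_eq; ring.
Qed.

(* Sufficiency: for odd d the slope d - 2 is a unit, so weights are distinct. *)
Lemma cube_antimagic_of_odd : odd d -> distance_antimagic (@cube_adj d) 'Z_(2 ^ d).
Proof.
move=> d_odd; exists code_label; split; first exact: code_label_bij.
have unit_coef : (d%:R - 2%:R : 'Z_(2 ^ d)) \is a GRing.unit.
  (* d - 2 is represented by the odd natural number d + 2^d - 2. *)
  have -> : (d%:R - 2%:R : 'Z_(2 ^ d)) = (d + 2 ^ d - 2)%N%:R.
    by rewrite natrB ?natrD ?pchar_Zp ?addr0 ?pow2_gt1 //; have := pow2_gt1 d_gt0; lia.
  apply: odd_unit_Zp_pow2 => //; rewrite oddB ?oddD ?oddX ?d_odd /=; last first.
    by have := pow2_gt1 d_gt0; lia.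
  by rewrite orbF addbF -lt0n.
move=> x y; rewrite !weight_code_label => /addIr /(mulrI unit_coef).
exact: (bij_inj code_label_bij).
Qed.

End Labellings.
End Hypercube.

Local Close Scope ring_scope.

Theorem mainTheorem4 (d : nat) (hd : (1 <= d)%N) :
  distance_antimagic (@cube_adj d) 'Z_(2 ^ d) <-> odd d.
Proof.
split; [exact: cube_antimagic_odd hd | exact: cube_antimagic_of_odd hd].
Qed.
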